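(* Let $V:\mathbb{R}^3\to\mathbb{R}$ satisfy \[ \int_{\mathbb{R}^3\times\mathbb{R}^3}\frac{|V(x)||V(y)|}{|x-y|^2}\,dx\,dy<(4\pi)^2,\qquad \|V\|_{\mathcal K}:=\sup_{x\in\mathbb{R}^3}\int_{\mathbb{R}^3}\frac{|V(y)|}{|x-y|}\,dy<4\pi . \] Then for every positive integer $k$, \[ \sup_{x_0,x_{k+1}\in\mathbb{R}^3}\int_{\mathbb{R}^{3k}}\frac{\prod_{j=1}^k|V(x_j)|}{\prod_{j=0}^k|x_j-x_{j+1}|}\sum_{\ell=0}^k|x_\ell-x_{\ell+1}|\,dx_1\cdots dx_k\le(k+1)\|V\|_{\mathcal K}^k . \] *)

From HB Require Import structures.
From mathcomp Require Import all_boot all_order all_algebra.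
From mathcomp Require Import all_classical all_reals all_analysis.
Set Implicit Arguments. Unset Strict Implicit. Unset Printing Implicit Defensive.
Import Order.TTheory GRing.Theory Num.Theory.
Import numFieldNormedType.Exports.
Local Open Scope classical_set_scope.
Local Open Scope ring_scope.

Definition R3 (R : realType) := ((R * R) * R)%type.

Definition leb3 (R : realType) :=
  ((@lebesgue_measure R \x @lebesgue_measure R) \x @lebesgue_measure R)%E.

Definition dist3 (R : realType) (x y : R3 R) : R :=
  Num.sqrt ((x.1.1 - y.1.1) ^+ 2 + (x.1.2 - y.1.2) ^+ 2 + (x.2 - y.2) ^+ 2).

Definition Knorm (R : realType) (V : R3 R -> R) : \bar R :=
  ereal_sup [set (\int[@leb3 R]_(y in setT) (`|V y| / dist3 x y)%:E)%E
            | x in [set: R3 R]].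

Fixpoint iter_int (R : realType) (n : nat) (f : seq (R3 R) -> \bar R) : \bar R :=
  match n with
  | 0 => f [::]
  | n'.+1 => (\int[@leb3 R]_(x in setT) iter_int n' (fun s => f (x :: s)))%E
  end.

Definition chain_integrand (R : realType) (V : R3 R -> R) (k : nat)
    (x0 : R3 R) (pts : seq (R3 R)) : R :=
  (\prod_(1 <= j < k.+1) `|V (nth x0 pts j)|)
  / (\prod_(0 <= j < k.+1) dist3 (nth x0 pts j) (nth x0 pts j.+1))
  * (\sum_(0 <= l < k.+1) dist3 (nth x0 pts l) (nth x0 pts l.+1)).

Definition chain_sup (R : realType) (V : R3 R -> R) (k : nat) : \bar R :=
  ereal_sup [set iter_int k
      (fun s => (chain_integrand V k x0 (x0 :: s ++ [:: xk1]))%:E)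
    | x0 in [set: R3 R] & xk1 in [set: R3 R]].

From HB Require Import structures.
From mathcomp Require Import all_boot all_order all_algebra.
From mathcomp Require Import all_classical all_reals all_analysis.
From mathcomp Require Import measurable_realfun ring.
Import Order.TTheory GRing.Theory Num.Theory.
Import numFieldNormedType.Exports.
Local Open Scope classical_set_scope.
Local Open Scope ring_scope.

(* Put κ(x, y) = |V y| / |x - y|, so that ∫ κ(x, y) dy <= K := ||V||_K for every x.
   Removing the l-th edge length from the denominator turns the l-th term of the
   integrand into a product of kernels along the chain x_0, ..., x_{k+1}, which
   gives the recursive majorant
     G(x_0; x_1, ..., x_k) = W(x_1; x_2, ..., x_k) + κ(x_0, x_1) G(x_1; x_2, ..., x_k),
   where W(x; y_1, ..., y_n) = κ(y_1, x) κ(y_2, y_1) ... κ(x_{k+1}, y_n).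
   Integrating out one variable at a time (Tonelli), every kernel costs at most a
   factor K: ∫ W <= K^k, hence ∫ G <= (k + 1) K^k by induction. *)

Section sigma_finite_product_measure.
Local Open Scope ereal_scope.
Context {d1 d2} {T1 : measurableType d1} {T2 : measurableType d2} {R : realType}.
Variables (m1 : {sigma_finite_measure set T1 -> \bar R})
          (m2 : {sigma_finite_measure set T2 -> \bar R}).

(* The library proves this only as a section-local [Let], hence not reusable. *)
Lemma sigma_finite_product_measure1 : sigma_finite setT (m1 \x m2).
Proof.
have /sigma_finiteP[F [TF ndF Ffin]] := sigma_finiteT m1.
have /sigma_finiteP[G [TG ndG Gfin]] := sigma_finiteT m2.
exists (fun n => F n `*` G n); last first.
  move=> n; have [mF Foo] := Ffin n; have [mG Goo] := Gfin n.
  split; first exact: measurableX.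
  by rewrite product_measure1E// lte_mul_pinfty// ge0_fin_numE.
apply/seteqP; split=> [[x y] _|//].
have [i _ Fx] : (\bigcup_n F n) x by rewrite -TF.
have [j _ Gy] : (\bigcup_n G n) y by rewrite -TG.
exists (maxn i j) => //; split.
- by move: x Fx; apply/subsetPset/ndF/leq_maxl.
- by move: y Gy; apply/subsetPset/ndG/leq_maxr.
Qed.

End sigma_finite_product_measure.

(* Named so that it can carry the σ-finite instance that Fubini on [leb3] needs. *)
Definition leb2 (R : realType) := (@lebesgue_measure R \x @lebesgue_measure R)%E.

HB.instance Definition _ (R : realType) := Measure.on (@leb2 R).
HB.instance Definition _ (R : realType) := Measure_isSigmaFinite.Build _ _ _ (@leb2 R)
  (sigma_finite_product_measure1 lebesgue_measure lebesgue_measure).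
HB.instance Definition _ (R : realType) := Measure.on (@leb3 R).
HB.instance Definition _ (R : realType) := Measure_isSigmaFinite.Build _ _ _ (@leb3 R)
  (sigma_finite_product_measure1 (@leb2 R) lebesgue_measure).

Lemma ge0_le_integralT d (T : measurableType d) (R : realType)
    (mu : {measure set T -> \bar R}) (f g : T -> \bar R) :
  (forall x, 0 <= f x)%E -> (forall x, f x <= g x)%E ->
  (\int[mu]_x f x <= \int[mu]_x g x)%E.
Proof.
move=> f0 fg; have g0 x : (0 <= g x)%E by exact: le_trans (f0 x) (fg x).
rewrite !ge0_integralTE//; apply: ereal_sup_le => _ [h /= hf <-].
by exists h => //= x; exact: le_trans (hf x) (fg x).
Qed.

Lemma mulVf_le1 (F : numFieldType) (e : F) : e^-1 * e <= 1.
Proof. by have [->|e_neq0] := eqVneq e 0; rewrite ?invr0 ?mul0r ?mulVf. Qed.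

Section R3.
Context {R : realType}.
Local Notation X := ((measurableTypeR R * measurableTypeR R) * measurableTypeR R)%type.
Local Notation mu := (@leb3 R).

Section iter_int.
Local Open Scope ereal_scope.

Lemma iter_int_ge0 n (f : seq X -> \bar R) :
  (forall s, size s = n -> 0 <= f s) -> 0 <= iter_int n f.
Proof.
elim: n f => [|n IHn] f f0 /=; first exact: f0.
by apply: integral_ge0 => x _; apply: IHn => s sn; apply: f0; rewrite /= sn.
Qed.

Lemma le_iter_int n (f g : seq X -> \bar R) :
  (forall s, size s = n -> 0 <= f s) -> (forall s, size s = n -> f s <= g s) ->
  iter_int n f <= iter_int n g.
Proof.
elim: n f g => [|n IHn] f g f0 fg /=; first exact: fg.
apply: ge0_le_integralT => x.
  by apply: iter_int_ge0 => s sn; apply: f0; rewrite /= sn.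
by apply: IHn => s sn; [apply: f0 | apply: fg]; rewrite /= sn.
Qed.

Lemma measurable_iter_int n d (T : measurableType d) (F : T -> seq X -> \bar R) :
  (forall p s, 0 <= F p s) ->
  measurable_fun setT (fun pt : T * n.-tuple X => F pt.1 pt.2) ->
  measurable_fun setT (fun p => iter_int n (F p)).
Proof.
elim: n d T F => [|n IHn] d T F F0 mF /=.
  have mpair : measurable_fun setT (fun p : T => (p, [tuple] : 0.-tuple X)).
    by apply: measurable_fun_pair; [exact: measurable_id | exact: measurable_cst].
  exact: measurableT_comp mF mpair.
have mFcons : measurable_fun setT
    (fun pt : (T * X) * n.-tuple X => F pt.1.1 (pt.1.2 :: pt.2)).
  apply: measurableT_comp mF (measurable_fun_pair _ _).
    exact: measurableT_comp measurable_fst measurable_fst.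
  exact: measurable_cons (measurableT_comp measurable_snd measurable_fst) measurable_snd.
have mIn := IHn _ _ (fun px s => F px.1 (px.2 :: s)) (fun _ _ => F0 _ _) mFcons.
exact: (measurable_fun_fubini_tonelli_F (m2 := mu) _ mIn
  (fun px => @iter_int_ge0 n _ (fun s _ => F0 _ _))).
Qed.

Definition tuple_measurable n (f : seq X -> \bar R) :=
  measurable_fun setT (fun t : n.-tuple X => f t).

Lemma tuple_measurable_cons n f :
  tuple_measurable n.+1 f ->
  measurable_fun setT (fun pt : X * n.-tuple X => f (pt.1 :: pt.2)).
Proof. by move=> mf; apply: measurableT_comp mf (measurable_cons _ _). Qed.

Lemma tuple_measurable_section n f x :
  tuple_measurable n.+1 f -> tuple_measurable n (fun s => f (x :: s)).
Proof. by move=> /tuple_measurable_cons mf; exact: measurable_fun_pair2 mf. Qed.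

Lemma measurable_iter_int_cons n f :
  (forall s, 0 <= f s) -> tuple_measurable n.+1 f ->
  measurable_fun setT (fun x => iter_int n (fun s => f (x :: s))).
Proof.
move=> f0 mf; apply: (@measurable_iter_int n _ X (fun x s => f (x :: s))) => //.
exact: tuple_measurable_cons.
Qed.

Lemma iter_intD n (f g : seq X -> \bar R) :
  (forall s, 0 <= f s) -> (forall s, 0 <= g s) ->
  tuple_measurable n f -> tuple_measurable n g ->
  iter_int n (fun s => f s + g s) = iter_int n f + iter_int n g.
Proof.
elim: n f g => [//|n IHn] f g f0 g0 mf mg /=.
rewrite -ge0_integralD //.
- by apply: eq_integral => x _; rewrite IHn //; exact: tuple_measurable_section.
- by move=> x _; exact: iter_int_ge0.
- exact: measurable_iter_int_cons.
- by move=> x _; exact: iter_int_ge0.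
- exact: measurable_iter_int_cons.
Qed.

Lemma iter_intZl n (f : seq X -> \bar R) (c : R) :
  (0 <= c)%R -> (forall s, 0 <= f s) -> tuple_measurable n f ->
  iter_int n (fun s => c%:E * f s) = c%:E * iter_int n f.
Proof.
elim: n f => [//|n IHn] f c0 f0 mf /=.
rewrite -ge0_integralZl_EFin //.
- by apply: eq_integral => x _; rewrite IHn //; exact: tuple_measurable_section.
- by move=> x _; exact: iter_int_ge0.
- exact: measurable_iter_int_cons.
Qed.

End iter_int.

Section dist3.

Lemma dist3C (x y : X) : dist3 x y = dist3 y x.
Proof.
by rewrite /dist3 -[x.1.1 - _]opprB -[x.1.2 - _]opprB -[x.2 - _]opprB !sqrrN.
Qed.

Lemma dist3_ge0 (x y : X) : 0 <= dist3 x y.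
Proof. exact: sqrtr_ge0. Qed.

Lemma measurable_dist3 : measurable_fun setT (fun p : X * X => dist3 p.1 p.2).
Proof.
have mR : measurable_fun (T := measurableTypeR R) (U := R) setT id.
  by move=> _ Y mY; rewrite setTI.
have m11 (j : X * X -> X) : measurable_fun setT j ->
    measurable_fun (U := R) setT (fun p => (j p).1.1).
  move=> mj; apply: measurableT_comp mR _.
  exact: measurableT_comp measurable_fst (measurableT_comp measurable_fst mj).
have m12 (j : X * X -> X) : measurable_fun setT j ->
    measurable_fun (U := R) setT (fun p => (j p).1.2).
  move=> mj; apply: measurableT_comp mR _.
  exact: measurableT_comp measurable_snd (measurableT_comp measurable_fst mj).
have m2 (j : X * X -> X) : measurable_fun setT j ->
    measurable_fun (U := R) setT (fun p => (j p).2).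
  by move=> mj; apply: measurableT_comp mR (measurableT_comp measurable_snd mj).
apply: measurableT_comp (continuous_measurable_fun (@sqrt_continuous R)) _.
apply: measurable_funD; [apply: measurable_funD|];
  apply: measurable_funX; apply: measurable_funB; auto.
Qed.

End dist3.

Section kernel_chain.
Variable k : X -> X -> R.
Hypothesis k_ge0 : forall x y, 0 <= k x y.
Hypothesis mk : measurable_fun setT (fun p : X * X => k p.1 p.2).
Variable z : X.

Fixpoint chain_weight (x : X) (s : seq X) : R :=
  if s is y :: s' then k y x * chain_weight y s' else k z x.

Fixpoint chain_bound (x : X) (s : seq X) : R :=
  if s is y :: s' then chain_weight y s' + k x y * chain_bound y s' else 1.

Lemma chain_weight_ge0 x s : 0 <= chain_weight x s.
Proof. by elim: s x => [|y s IHs] x /=; rewrite ?mulr_ge0. Qed.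

Lemma chain_bound_ge0 x s : 0 <= chain_bound x s.
Proof.
by elim: s x => [|y s IHs] x //=; rewrite addr_ge0 ?mulr_ge0 ?chain_weight_ge0.
Qed.

Lemma measurable_kernel {d} {T : measurableType d} {f g : T -> X} :
  measurable_fun setT f -> measurable_fun setT g ->
  measurable_fun setT (fun t => k (f t) (g t)).
Proof. by move=> mf mg; exact: measurableT_comp mk (measurable_fun_pair mf mg). Qed.

Lemma measurable_uncons n :
  measurable_fun setT (fun t : n.+1.-tuple X => (thead t, [tuple of behead t])).
Proof. by apply: measurable_fun_pair; [exact: measurable_tnth | exact: measurable_behead]. Qed.

Lemma measurable_chain_weight n :
  measurable_fun setT (fun p : X * n.-tuple X => chain_weight p.1 p.2).
Proof.
elim: n => [|n IHn].
  have -> : (fun p : X * 0.-tuple X => chain_weight p.1 p.2) = (fun p => k z p.1).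
    by apply/funext => -[x t]; rewrite tuple0.
  by apply: measurable_kernel; [exact: measurable_cst | exact: measurable_fst].
have -> : (fun p : X * n.+1.-tuple X => chain_weight p.1 p.2) =
    (fun p => k (thead p.2) p.1 * chain_weight (thead p.2) [tuple of behead p.2]).
  by apply/funext => -[x t]; case/tupleP: t => y t; rewrite theadE.
apply: measurable_funM; last exact: measurableT_comp IHn (measurableT_comp (measurable_uncons n) measurable_snd).
apply: measurable_kernel measurable_fst.
exact: measurableT_comp (measurable_tnth _) measurable_snd.
Qed.

Lemma measurable_chain_bound n :
  measurable_fun setT (fun p : X * n.-tuple X => chain_bound p.1 p.2).
Proof.
elim: n => [|n IHn].
  have -> : (fun p : X * 0.-tuple X => chain_bound p.1 p.2) = cst 1.
    by apply/funext => -[x t]; rewrite tuple0.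
  exact: measurable_cst.
have -> : (fun p : X * n.+1.-tuple X => chain_bound p.1 p.2) =
    (fun p => chain_weight (thead p.2) [tuple of behead p.2] +
       k p.1 (thead p.2) * chain_bound (thead p.2) [tuple of behead p.2]).
  by apply/funext => -[x t]; case/tupleP: t => y t; rewrite theadE.
apply: measurable_funD.
  exact: measurableT_comp (measurable_chain_weight n) (measurableT_comp (measurable_uncons n) measurable_snd).
apply: measurable_funM; last exact: measurableT_comp IHn (measurableT_comp (measurable_uncons n) measurable_snd).
apply: measurable_kernel measurable_fst _.
exact: measurableT_comp (measurable_tnth _) measurable_snd.
Qed.

Local Open Scope ereal_scope.

Definition int_chain_weight n x := iter_int n (fun s => (chain_weight x s)%:E).
Definition int_chain_bound n x := iter_int n (fun s => (chain_bound x s)%:E).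

Lemma int_chain_weight_ge0 n x : 0 <= int_chain_weight n x.
Proof. by apply: iter_int_ge0 => s _; rewrite lee_fin chain_weight_ge0. Qed.

Lemma int_chain_bound_ge0 n x : 0 <= int_chain_bound n x.
Proof. by apply: iter_int_ge0 => s _; rewrite lee_fin chain_bound_ge0. Qed.

Lemma tuple_measurable_chain_weight n x :
  tuple_measurable n (fun s => (chain_weight x s)%:E).
Proof.
rewrite /tuple_measurable; apply/measurable_EFinP.
exact: measurable_fun_pair2 x (measurable_chain_weight n).
Qed.

Lemma tuple_measurable_chain_bound n x :
  tuple_measurable n (fun s => (chain_bound x s)%:E).
Proof.
rewrite /tuple_measurable; apply/measurable_EFinP.
exact: measurable_fun_pair2 x (measurable_chain_bound n).
Qed.

Lemma measurable_int_chain_weight n : measurable_fun setT (int_chain_weight n).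
Proof.
apply: (@measurable_iter_int n _ X (fun x s => (chain_weight x s)%:E)).
  by move=> x s; rewrite lee_fin chain_weight_ge0.
by apply/measurable_EFinP; exact: measurable_chain_weight.
Qed.

Lemma measurable_int_chain_bound n : measurable_fun setT (int_chain_bound n).
Proof.
apply: (@measurable_iter_int n _ X (fun x s => (chain_bound x s)%:E)).
  by move=> x s; rewrite lee_fin chain_bound_ge0.
by apply/measurable_EFinP; exact: measurable_chain_bound.
Qed.

Lemma int_chain_weightS n x :
  int_chain_weight n.+1 x = \int[mu]_y ((k y x)%:E * int_chain_weight n y).
Proof.
rewrite /int_chain_weight /=; apply: eq_integral => y _.
rewrite -iter_intZl ?k_ge0 //; last exact: tuple_measurable_chain_weight.
by move=> s; rewrite lee_fin chain_weight_ge0.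
Qed.

Lemma int_chain_boundS n x : int_chain_bound n.+1 x =
  \int[mu]_y (int_chain_weight n y + (k x y)%:E * int_chain_bound n y).
Proof.
rewrite /int_chain_bound /int_chain_weight /=; apply: eq_integral => y _.
rewrite -iter_intZl ?k_ge0 // -?iter_intD.
- by congr iter_int; apply/funext => s; rewrite EFinD EFinM.
- by move=> s; rewrite lee_fin chain_weight_ge0.
- by move=> s; rewrite mule_ge0 ?lee_fin ?k_ge0 ?chain_bound_ge0.
- exact: tuple_measurable_chain_weight.
- exact: measurable_funeM (tuple_measurable_chain_bound n y).
- by move=> s; rewrite lee_fin chain_bound_ge0.
- exact: tuple_measurable_chain_bound.
Qed.

Variable K : R.
Hypothesis int_k_le : forall x, \int[mu]_y (k x y)%:E <= K%:E.

Let K_ge0 : (0 <= K)%R.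
Proof.
by rewrite -lee_fin (le_trans _ (int_k_le z))// integral_ge0// => y _; rewrite lee_fin.
Qed.

Let measurable_k_section x : measurable_fun setT (fun y => (k x y)%:E).
Proof. by apply/measurable_EFinP; exact: measurable_fun_pair2 x mk. Qed.

Lemma integral_int_chain_weight_le n :
  \int[mu]_x int_chain_weight n x <= (K ^+ n.+1)%:E.
Proof.
elim: n => [|n IHn]; first by rewrite expr1; exact: int_k_le.
under eq_integral do rewrite int_chain_weightS.
have mkW : measurable_fun setT
    (fun p : X * X => (k p.2 p.1)%:E * int_chain_weight n p.2).
  apply: emeasurable_funM.
    by apply/measurable_EFinP; exact: measurable_kernel measurable_snd measurable_fst.
  exact: measurableT_comp (measurable_int_chain_weight n) measurable_snd.
rewrite (fubini_tonelli (m1 := mu) (m2 := mu) _ mkW) /=; last first.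
  by move=> p; rewrite mule_ge0 ?lee_fin ?k_ge0 ?int_chain_weight_ge0.
apply: le_trans (_ : \int[mu]_y (K%:E * int_chain_weight n y) <= _).
  apply: ge0_le_integralT => y.
    by apply: integral_ge0 => x _; rewrite mule_ge0 ?lee_fin ?k_ge0 ?int_chain_weight_ge0.
  rewrite (ge0_integralZr mu measurableT (measurable_k_section y)) //.
  - by apply: lee_wpmul2r; [exact: int_chain_weight_ge0 | exact: int_k_le].
  - by move=> x _; rewrite lee_fin k_ge0.
  - exact: int_chain_weight_ge0.
rewrite ge0_integralZl_EFin //.
- by rewrite exprS EFinM lee_wpmul2l // lee_fin.
- by move=> y _; exact: int_chain_weight_ge0.
- exact: measurable_int_chain_weight.
Qed.

Lemma int_chain_bound_le n x : int_chain_bound n x <= (n.+1%:R * K ^+ n)%:E.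
Proof.
elim: n x => [|n IHn] x; first by rewrite /int_chain_bound /= mul1r expr0.
have nK_ge0 : (0 <= n.+1%:R * K ^+ n)%R by rewrite mulr_ge0 ?exprn_ge0.
have int_kB_le : \int[mu]_y ((k x y)%:E * int_chain_bound n y)
    <= K%:E * (n.+1%:R * K ^+ n)%:E.
  apply: le_trans (_ : \int[mu]_y ((k x y)%:E * (n.+1%:R * K ^+ n)%:E) <= _).
    apply: ge0_le_integralT => y.
      by rewrite mule_ge0 ?lee_fin ?k_ge0 ?int_chain_bound_ge0.
    by rewrite lee_wpmul2l ?lee_fin ?k_ge0.
  rewrite (ge0_integralZr mu measurableT (measurable_k_section x)) //.
  - by rewrite lee_wpmul2r ?lee_fin.
  - by move=> y _; rewrite lee_fin k_ge0.
rewrite int_chain_boundS ge0_integralD //.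
- apply: le_trans (leeD (integral_int_chain_weight_le n) int_kB_le) _.
  rewrite -EFinM -EFinD lee_fin.
  have -> : (K ^+ n.+1 + K * (n.+1%:R * K ^+ n) = n.+2%:R * K ^+ n.+1)%R.
    by rewrite -[n.+2]addn1 natrD exprS; ring.
  exact: lexx.
- by move=> y _; exact: int_chain_weight_ge0.
- exact: measurable_int_chain_weight.
- by move=> y _; rewrite mule_ge0 ?lee_fin ?k_ge0 ?int_chain_bound_ge0.
- exact: emeasurable_funM (measurable_int_chain_bound n).
Qed.

End kernel_chain.

Section kato_kernel.
Variable V : X -> R.

Definition kato_kernel (x y : X) : R := `|V y| / dist3 x y.

Lemma kato_kernel_ge0 x y : 0 <= kato_kernel x y.
Proof. by rewrite divr_ge0 ?dist3_ge0. Qed.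

Lemma measurable_kato_kernel : measurable_fun setT V ->
  measurable_fun setT (fun p : X * X => kato_kernel p.1 p.2).
Proof.
move=> mV; rewrite /kato_kernel.
have -> : (fun p : X * X => `|V p.2| / dist3 p.1 p.2) =
    (fun p => `|V p.2| * dist3 p.1 p.2 `^ (-1)).
  by apply/funext => p; rewrite powR_inv1 ?dist3_ge0.
apply: measurable_funM.
  by apply: measurableT_comp; [exact: normr_measurable | exact: measurableT_comp].
exact: measurableT_comp (measurable_powR _) measurable_dist3.
Qed.

Lemma int_kato_kernel_le_Knorm x : (\int[mu]_y (kato_kernel x y)%:E <= Knorm V)%E.
Proof. by apply: ereal_sup_ubound; exists x. Qed.

Lemma Knorm_ge0 : (0 <= Knorm V)%E.
Proof.
apply: le_trans (int_kato_kernel_le_Knorm ((0, 0), 0)).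
by apply: integral_ge0 => y _; rewrite lee_fin kato_kernel_ge0.
Qed.

Lemma chain_integrand_ge0 n d q : 0 <= chain_integrand V n d q.
Proof.
rewrite /chain_integrand mulr_ge0 ?divr_ge0 ?prodr_ge0 ?sumr_ge0 // => j _.
all: exact: dist3_ge0.
Qed.

Variable z : X.

Lemma chain_weightE d x s (q := x :: s ++ [:: z]) :
  chain_weight kato_kernel z x s =
  `|V x| * \prod_(1 <= j < (size s).+1) `|V (nth d q j)|
    / \prod_(0 <= j < (size s).+1) dist3 (nth d q j) (nth d q j.+1).
Proof.
rewrite {}/q; elim: s x => [|y s IHs] x /=.
  by rewrite big_geq // big_nat1 /= mulr1 /kato_kernel dist3C.
rewrite IHs (big_nat_recl (size s).+1 1) // (big_nat_recl (size s).+1 0) //=.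
by rewrite /kato_kernel (dist3C y x) invfM; ring.
Qed.

(* Only an inequality because [0^-1 = 0]: an edge of length zero contributes
   [e^-1 * e = 0] instead of [1]. *)
Lemma chain_integrand_le_chain_bound d x s :
  chain_integrand V (size s) d (x :: s ++ [:: z]) <= chain_bound kato_kernel z x s.
Proof.
elim: s x => [|y s IHs] x.
  by rewrite /chain_integrand big_geq // !big_nat1 /= div1r mulVf_le1.
have IHy := IHs y; have cwE := chain_weightE d y s.
rewrite /chain_integrand in IHy *; rewrite /= (big_nat_recl (size s).+1 1) //.
rewrite (big_nat_recl (size s).+1 0) // (big_nat_recl (size s).+1 0) //=.
set P := \prod_(1 <= j < _) _ in IHy cwE *; set D := \prod_(0 <= j < _) _ in IHy cwE *.
set S := \sum_(0 <= j < _) _ in IHy *; set e := dist3 x y.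
have -> : `|V y| * P / (e * D) * (e + S) =
    `|V y| * P / D * (e^-1 * e) + kato_kernel x y * (P / D * S).
  by rewrite /kato_kernel invfM; ring.
apply: lerD.
  rewrite -cwE -[leRHS]mulr1 ler_wpM2l ?mulVf_le1 //.
  exact: chain_weight_ge0 kato_kernel_ge0 _ _ _.
by rewrite ler_wpM2l ?kato_kernel_ge0.
Qed.

End kato_kernel.

End R3.

Theorem lemma2p5 (R : realType) (V : R3 R -> R)
  (mV : measurable_fun [set: R3 R] V)
  (H1 : (\int[(@leb3 R \x @leb3 R)%E]_(z in [set: R3 R * R3 R])
           (`|V z.1| * `|V z.2| / dist3 z.1 z.2 ^+ 2)%:E
         < ((4 * pi) ^+ 2)%:E)%E)
  (H2 : (Knorm V < (4 * pi)%:E)%E) :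
  forall k : nat, (0 < k)%N ->
    (chain_sup V k <= (k.+1%:R * fine (Knorm V) ^+ k)%:E)%E.
Proof.
move=> k _.
have Knorm_fin : Knorm V \is a fin_num.
  by rewrite ge0_fin_numE ?Knorm_ge0 // (lt_trans H2) ?ltey.
have int_kato_le x : (\int[@leb3 R]_y (kato_kernel V x y)%:E <= (fine (Knorm V))%:E)%E.
  by rewrite fineK //; exact: int_kato_kernel_le_Knorm.
apply: ge_ereal_sup => _ [x0 _ [z _ <-]].
apply: le_trans (int_chain_bound_le (kato_kernel V) (kato_kernel_ge0 V)
  (measurable_kato_kernel V mV) z _ int_kato_le k x0).
apply: le_iter_int => s sk; rewrite -sk lee_fin.
  exact: chain_integrand_ge0.
exact: chain_integrand_le_chain_bound.
Qed.
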